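(* Let $\mathcal B$ be a weak $\mathfrak b$-scale, $s\in\omega^{<\omega}$ and $f\in\mathcal B$. (1) If $s\in U(f)$, then $s^\frown\triangle_{f(s)}\subseteq U(f)$, where $s^\frown F=\{s^\frown z: z\in F\}$. (2) The set $\{g\in\mathcal B: s\in U(g)\}$ is cofinal in $(\mathcal B,\le^* )$.
   Context: For $m\in\omega$ let $\triangle_m=m^{\le m}$ (finite sequences of length at most $m$ with entries $<m$). A function $f:\omega^{<\omega}\to\omega$ is increasing if $f(s)<f(t)$ whenever $s$ is a proper initial segment of $t$, and $f(s^\frown n)<f(s^\frown m)$ whenever $n<m$. For $f,g:\omega^{<\omega}\to\omega$, $f\le^* g$ means $f(s)\le g(s)$ for all but finitely many $s$. A family $\mathcal B$ of functions $\omega^{<\omega}\to\omega$ is a weak $\mathfrak b$-scale if (a) every member is increasing, (b) there is no $g$ with $f\le^* g$ for all $f\in\mathcal B$, (c) $\mathcal B$ is well-ordered by $\le^*$, (d) for every $n\in\omega$ the set $\{f\in\mathcal B: n<f(\emptyset)\}$ is cofinal in $(\mathcal B,\le^* )$. For $f:\omega^{<\omega}\to\omega$, $U(f)\subseteq\omega^{<\omega}$ is the tree defined by: $\emptyset\in U(f)$, and for $s\in U(f)$, $s^\frown k\in U(f)$ iff $k\ne f(s)$. *)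

From mathcomp Require Import all_boot.
Set Implicit Arguments. Unset Strict Implicit. Unset Printing Implicit Defensive.

Definition fn := seq nat -> nat.

(* triangle_m = m^{<= m}: sequences of length <= m with entries < m *)
Definition in_triangle (m : nat) (z : seq nat) : bool :=
  (size z <= m) && all (fun k => k < m) z.

Definition proper_prefix (s t : seq nat) : bool := prefix s t && (s != t).

Definition increasing (f : fn) : Prop :=
  (forall s t, proper_prefix s t -> f s < f t) /\
  (forall s n m, n < m -> f (rcons s n) < f (rcons s m)).

Definition le_star (f g : fn) : Prop :=
  exists l : seq (seq nat), forall s, g s < f s -> s \in l.

Definition cofinal (B C : fn -> Prop) : Prop :=
  (forall g, C g -> B g) /\ (forall f, B f -> exists2 g, C g & le_star f g).

Definition well_ordered_star (B : fn -> Prop) : Prop :=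
  (forall f, B f -> le_star f f) /\
  (forall f g, B f -> B g -> le_star f g -> le_star g f -> f = g) /\
  (forall f g h, B f -> B g -> B h -> le_star f g -> le_star g h -> le_star f h) /\
  (forall f g, B f -> B g -> le_star f g \/ le_star g f) /\
  (forall A : fn -> Prop, (forall f, A f -> B f) -> (exists f, A f) ->
     exists2 f, A f & forall g, A g -> le_star f g).

Definition weak_b_scale (B : fn -> Prop) : Prop :=
  (forall f, B f -> increasing f) /\
  ~ (exists g : fn, forall f, B f -> le_star f g) /\
  well_ordered_star B /\
  (forall n : nat, cofinal B (fun f => B f /\ n < f [::])).

Inductive inU (f : fn) : seq nat -> Prop :=
| inU_nil : inU f [::]
| inU_rcons s k : inU f s -> k != f s -> inU f (rcons s k).

From mathcomp Require Import all_boot.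
Set Implicit Arguments. Unset Strict Implicit. Unset Printing Implicit Defensive.

(* An increasing f takes larger values further up each branch, so once every
   entry of z stays below f s, no entry of s ++ z can hit the excluded value
   f at its predecessor.  With s = [::] this shows that a fixed s lies in U(g)
   as soon as g [::] exceeds every entry of s, and condition (d) of a weak
   b-scale supplies cofinally many such g. *)

Lemma increasing_prefix (g : fn) s t : increasing g -> prefix s t -> g s <= g t.
Proof.
move=> [g_lt _] s_t; have [-> // | s_neq_t] := eqVneq s t.
by apply/ltnW/g_lt; rewrite /proper_prefix s_t s_neq_t.
Qed.

Lemma inU_cat (g : fn) s z : increasing g -> inU g s ->
  all (fun k => k < g s) z -> inU g (s ++ z).
Proof.
move=> g_incr Us; elim/last_ind: z => [_ | z k IHz]; first by rewrite cats0.
rewrite all_rcons => /andP[k_lt z_lt]; rewrite -rcons_cat.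
apply: inU_rcons; first exact: IHz.
have g_s_le := increasing_prefix g_incr (prefix_prefix s z).
by rewrite neq_ltn (leq_trans k_lt g_s_le).
Qed.

Lemma inU_small (g : fn) s : increasing g ->
  all (fun k => k < g [::]) s -> inU g s.
Proof. by move=> g_incr; apply: (inU_cat g_incr (inU_nil g)). Qed.

Lemma cofinal_inU (B : fn -> Prop) s :
  (forall g, B g -> increasing g) ->
  (forall n, cofinal B (fun g => B g /\ n < g [::])) ->
  cofinal B (fun g => B g /\ inU g s).
Proof.
move=> B_incr B_large; split=> [g [] // | f Bf].
have [_ /(_ f Bf) [g [Bg max_lt] f_le_g]] := B_large (\max_(k <- s) k).
exists g; last exact: f_le_g; split=> //; apply: inU_small; first exact: B_incr.
by apply/allP=> k k_s; apply: leq_ltn_trans max_lt; apply: leq_bigmax_seq.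
Qed.

Theorem lemma22 (B : fn -> Prop) (s : seq nat) (f : fn) :
  weak_b_scale B -> B f ->
  (inU f s -> forall z, in_triangle (f s) z -> inU f (s ++ z)) /\
  cofinal B (fun g => B g /\ inU g s).
Proof.
move=> [B_incr [_ [_ B_large]]] Bf; split; last exact: cofinal_inU.
by move=> Us z /andP[_ z_lt]; apply: inU_cat Us z_lt; apply: B_incr.
Qed.
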